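(* Assume (A1)–(A4) and $\eta_x,\eta_z>0$ (see context). Then the iterates of the Jacobi scheme satisfy, for all $k\ge1$, $$\Delta\Phi^k\le-\eta_x\sum_{t=1}^T\Big(\|\Delta x_t^k\|^2_{A_t^\top A_t}+\|\Delta x_t^{k-1}\|^2_{A_t^\top A_t}\Big)-\eta_z\Big(\|\Delta z^k\|^2+\|\Delta z^{k-1}\|^2\Big).$$
   Context: Let $T\ge1$, $[T]=\{1,\dots,T\}$; for $t\in[T]$: $X_t\subseteq\mathbb{R}^{n_t}$, $f_t:\mathbb{R}^{n_t}\to\mathbb{R}$, $A_t\in\mathbb{R}^{m\times n_t}$; $b\in\mathbb{R}^m$; $X=\prod_tX_t$, $A=[A_1\cdots A_T]$, $Ax=\sum_tA_tx_t$, $A_{\neq t}x_{\neq t}=\sum_{s\neq t}A_sx_s$; $\|w\|_M=\sqrt{w^\top Mw}$. Assumptions: (A1) $X_t$ nonempty compact; (A2) $f_t$ is $C^2$; (A3) $A$ full row rank; (A4) $\{x\in X:Ax=b\}\neq\emptyset$. Parameters $\rho,\theta,\tau_x,\tau_z>0$ with $\eta_x:=\frac{\tau_x}{4}-\frac{(T-1)\rho}{2}>0$, $\eta_z:=\frac{\tau_z}{4}-\frac{2(\theta+\tau_z)^2}{\rho}>0$. $\mathcal{L}(x,z,\lambda)=\sum_tf_t(x_t)+\frac{\theta}{2}\|z\|^2+\lambda^\top(Ax+z-b)+\frac{\rho}{2}\|Ax+z-b\|^2$. Jacobi scheme: given $x^0\in X$, $z^0,\lambda^0\in\mathbb{R}^m$,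 for $k\ge1$: (i) for each $t$, $x_t^k$ is a local minimizer, computed by a solver warm-started at $x_t^{k-1}$ (so that its subproblem objective does not exceed that of $x_t^{k-1}$), of $\min_{x_t\in X_t}f_t(x_t)+(\lambda^{k-1})^\top A_tx_t+\frac{\rho}{2}\|A_tx_t+A_{\neq t}x^{k-1}_{\neq t}+z^{k-1}-b\|^2+\frac{\tau_x}{2}\|x_t-x_t^{k-1}\|^2_{A_t^\top A_t}$; (ii) $z^k=(\tau_zz^{k-1}-\rho(Ax^k-b)-\lambda^{k-1})/(\tau_z+\rho+\theta)$; (iii) $\lambda^k=\lambda^{k-1}+\rho(Ax^k+z^k-b)$. $\Phi(x,z,\lambda,\hat x,\hat z)=\mathcal{L}(x,z,\lambda)+\frac{\tau_z}{4}\|z-\hat z\|^2+\sum_t\frac{\tau_x}{4}\|x_t-\hat x_t\|^2_{A_t^\top A_t}$; $\Phi^k=\Phi(x^k,z^k,\lambda^k,x^{k-1},z^{k-1})$ for $k\ge1$. For $k\ge1$: $\Delta x^k=x^k-x^{k-1}$, $\Delta z^k=z^k-z^{k-1}$, $\Delta\Phi^k=\Phi^k-\Phi^{k-1}$. Also $\Delta z^0=-\tau_z^{-1}(\lambda^0+\theta z^0)$, $\Delta x^0=0$, $\Phi^0=\mathcal{L}(x^0,z^0,\lambda^0)+\frac{\tau_z}{4}\|\Delta z^0\|^2$. *)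

From HB Require Import structures.
From mathcomp Require Import all_boot all_order all_algebra.
From mathcomp Require Import all_classical all_reals all_analysis.
Set Implicit Arguments. Unset Strict Implicit. Unset Printing Implicit Defensive.
Import Order.TTheory GRing.Theory Num.Theory.
Import numFieldNormedType.Exports.
Local Open Scope classical_set_scope.
Local Open Scope ring_scope.

Section Defs.
Variable R : realType.

Definition sqn m (w : 'cV[R]_m) : R := (w^T *m w) 0 0.
Definition wsqn m (M : 'M[R]_m) (w : 'cV[R]_m) : R := (w^T *m M *m w) 0 0.

Definition ebase n (i : 'I_n) : 'cV[R]_n := delta_mx i 0.

Definition C2 n (f : 'cV[R]_n -> R) : Prop :=
  (forall i x, derivable f x (ebase i)) /\
  (forall i, continuous (fun x => 'D_(ebase i) f x)) /\
  (forall i j x, derivable (fun y => 'D_(ebase i) f y) x (ebase j)) /\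
  (forall i j, continuous (fun x => 'D_(ebase j) (fun y => 'D_(ebase i) f y) x)).

Variables (T m : nat) (n : 'I_T -> nat).

Definition Aop (A : forall t, 'M[R]_(m, n t)) (x : forall t, 'cV[R]_(n t)) : 'cV[R]_m :=
  \sum_(t < T) A t *m x t.

Definition Lag (f : forall t, 'cV[R]_(n t) -> R) (A : forall t, 'M[R]_(m, n t))
  (b : 'cV[R]_m) (rho theta : R) (x : forall t, 'cV[R]_(n t)) (z lam : 'cV[R]_m) : R :=
  \sum_(t < T) f t (x t) + theta / 2 * sqn z
  + (lam^T *m (Aop A x + z - b)) 0 0 + rho / 2 * sqn (Aop A x + z - b).

Definition PhiF (f : forall t, 'cV[R]_(n t) -> R) (A : forall t, 'M[R]_(m, n t))
  (b : 'cV[R]_m) (rho theta taux tauz : R)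
  (x : forall t, 'cV[R]_(n t)) (z lam : 'cV[R]_m)
  (xh : forall t, 'cV[R]_(n t)) (zh : 'cV[R]_m) : R :=
  Lag f A b rho theta x z lam + tauz / 4 * sqn (z - zh)
  + \sum_(t < T) taux / 4 * wsqn ((A t)^T *m A t) (x t - xh t).

(* the x_t-subproblem objective at iteration k (k >= 1), using iterate k-1 *)
Definition subobj (f : forall t, 'cV[R]_(n t) -> R) (A : forall t, 'M[R]_(m, n t))
  (b : 'cV[R]_m) (rho taux : R)
  (xp : forall t, 'cV[R]_(n t)) (zp lamp : 'cV[R]_m) (t : 'I_T) (y : 'cV[R]_(n t)) : R :=
  f t y + (lamp^T *m (A t *m y)) 0 0
  + rho / 2 * sqn (A t *m y + (\sum_(s < T | s != t) A s *m xp s) + zp - b)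
  + taux / 2 * wsqn ((A t)^T *m A t) (y - xp t).

Definition dz (theta tauz : R) (z lam : nat -> 'cV[R]_m) (k : nat) : 'cV[R]_m :=
  if k is k'.+1 then z k - z k' else - (tauz^-1 *: (lam 0%N + theta *: z 0%N)).

Definition dx (x : nat -> forall t, 'cV[R]_(n t)) (k : nat) (t : 'I_T) : 'cV[R]_(n t) :=
  if k is k'.+1 then x k t - x k' t else 0.

Definition Phi (f : forall t, 'cV[R]_(n t) -> R) (A : forall t, 'M[R]_(m, n t))
  (b : 'cV[R]_m) (rho theta taux tauz : R)
  (x : nat -> forall t, 'cV[R]_(n t)) (z lam : nat -> 'cV[R]_m) (k : nat) : R :=
  if k is k'.+1 then PhiF f A b rho theta taux tauz (x k) (z k) (lam k) (x k') (z k')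
  else Lag f A b rho theta (x 0%N) (z 0%N) (lam 0%N) + tauz / 4 * sqn (dz theta tauz z lam 0).

End Defs.

From HB Require Import structures.
From mathcomp Require Import all_boot all_order all_algebra.
From mathcomp Require Import all_classical all_reals all_analysis.
From mathcomp Require Import ring lra.
Import Order.TTheory GRing.Theory Num.Theory.
Import numFieldNormedType.Exports.
Local Open Scope classical_set_scope.
Local Open Scope ring_scope.
Set Implicit Arguments. Unset Strict Implicit. Unset Printing Implicit Defensive.

(* Phi^k - Phi^(k-1) splits along the three updates of the augmented
   Lagrangian L.  The Jacobi x-update decreases L by at least
   ((taux - (T-1) rho) / 2) sum_t ||A_t dx_t||^2: each block solve decreases its
   own proximal subproblem, and ||sum_t A_t dx_t||^2 <= T sum_t ||A_t dx_t||^2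
   bounds the coupling error of the simultaneous sweep.  The z-update
   minimizes the quadratic L + (tauz / 2) ||z - z^(k-1)||^2 in z, so it
   decreases L by ((theta + rho) / 2 + tauz) ||dz^k||^2.  The dual update increases L by
   rho ||A x^k + z^k - b||^2 = ||dlam^k||^2 / rho, and stationarity of the
   z-update gives lam^k = - theta z^k - tauz dz^k (also for k = 0, by the
   convention on dz^0), so dlam^k is a combination of dz^k and dz^(k-1).  The
   proximal terms of Phi absorb the remaining dx^(k-1) and dz^(k-1)
   contributions. *)

Section Dot.
Variables (R : realType) (m : nat).
Implicit Types (u v w : 'cV[R]_m) (a : R).

Definition dot u v : R := (u^T *m v) 0 0.

Lemma sqnE u : sqn u = dot u u. Proof. by []. Qed.

Lemma dotC u v : dot u v = dot v u.
Proof. by rewrite /dot -[v]trmxK -trmx_mul mxE trmxK. Qed.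

Lemma dotDl u v w : dot (u + v) w = dot u w + dot v w.
Proof. by rewrite /dot linearD mulmxDl mxE. Qed.

Lemma dotDr u v w : dot u (v + w) = dot u v + dot u w.
Proof. by rewrite /dot mulmxDr mxE. Qed.

Lemma dotZl a u v : dot (a *: u) v = a * dot u v.
Proof. by rewrite /dot linearZ -scalemxAl mxE. Qed.

Lemma dotZr a u v : dot u (a *: v) = a * dot u v.
Proof. by rewrite /dot -scalemxAr mxE. Qed.

Lemma dotBr u v w : dot u (v - w) = dot u v - dot u w.
Proof. by rewrite -scaleN1r dotDr dotZr mulN1r. Qed.

Lemma dot_sumr I (r : seq I) (P : pred I) (F : I -> 'cV[R]_m) u :
  dot u (\sum_(i <- r | P i) F i) = \sum_(i <- r | P i) dot u (F i).
Proof. by rewrite /dot mulmx_sumr summxE. Qed.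

Lemma dot_suml I (r : seq I) (P : pred I) (F : I -> 'cV[R]_m) u :
  dot (\sum_(i <- r | P i) F i) u = \sum_(i <- r | P i) dot (F i) u.
Proof. by rewrite dotC dot_sumr; apply: eq_bigr => i _; rewrite dotC. Qed.

Lemma sqn_ge0 u : 0 <= sqn u.
Proof. by rewrite /sqn mxE; apply: sumr_ge0 => i _; rewrite mxE -expr2 sqr_ge0. Qed.

Lemma sqnD u v : sqn (u + v) = sqn u + 2 * dot u v + sqn v.
Proof. by rewrite !sqnE dotDl !dotDr (dotC v u); ring. Qed.

Lemma sqnZ a u : sqn (a *: u) = a ^+ 2 * sqn u.
Proof. by rewrite sqnE dotZl dotZr -sqnE mulrA -expr2. Qed.

Lemma sqnB u v : sqn (u - v) = sqn u - 2 * dot u v + sqn v.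
Proof. by rewrite -scaleN1r sqnD sqnZ dotZr; ring. Qed.

Lemma dot_le_sqn u v : 2 * dot u v <= sqn u + sqn v.
Proof. by have := sqn_ge0 (u - v); rewrite sqnB; lra. Qed.

Lemma sqnD_le u v : sqn (u + v) <= 2 * (sqn u + sqn v).
Proof. by have := dot_le_sqn u v; rewrite sqnD; lra. Qed.

Lemma sqn_sum_le (T : nat) (g : 'I_T -> 'cV[R]_m) :
  sqn (\sum_t g t) <= T%:R * \sum_t sqn (g t).
Proof.
rewrite sqnE dot_suml.
under eq_bigr => t _ do rewrite dot_sumr.
apply: (@le_trans _ _ (\sum_t \sum_(s < T) (sqn (g t) + sqn (g s)) / 2)).
  apply: ler_sum => t _; apply: ler_sum => s _.
  by have := dot_le_sqn (g t) (g s); lra.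
under eq_bigr => t _ do rewrite -mulr_suml big_split /= sumr_const card_ord.
by rewrite -mulr_suml big_split /= sumrMnl sumr_const card_ord -mulr_natl; lra.
Qed.

End Dot.

Lemma wsqn_mulTmx (R : realType) m k (M : 'M[R]_(m, k)) (w : 'cV[R]_k) :
  wsqn (M^T *m M) w = sqn (M *m w).
Proof. by rewrite /wsqn /sqn trmx_mul !mulmxA. Qed.

Lemma wsqn0 (R : realType) k (M : 'M[R]_k) : wsqn M 0 = 0.
Proof. by rewrite /wsqn mulmx0 mxE. Qed.

Lemma natB1_mul_sum_ge0 (R : realType) (T : nat) (F : 'I_T -> R) :
  (forall t, 0 <= F t) -> 0 <= (T%:R - 1) * \sum_t F t.
Proof.
move=> F_ge0; rewrite mulr_sumr; apply: sumr_ge0 => t _.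
by rewrite mulr_ge0 // subr_ge0 ler1n (leq_ltn_trans _ (ltn_ord t)).
Qed.

Section AugmentedLagrangian.
Variables (R : realType) (T m : nat) (n : 'I_T -> nat).
(* Keeps the block index [t] of [f] and [A] explicit. *)
Unset Implicit Arguments.
Variables (f : forall t, 'cV[R]_(n t) -> R) (A : forall t, 'M[R]_(m, n t)).
Set Implicit Arguments.
Variables (b : 'cV[R]_m) (rho theta : R).
Implicit Types (x y : forall t, 'cV[R]_(n t)) (z lam : 'cV[R]_m).

Local Notation L := (Lag f A b rho theta).

Definition residual x z := Aop A x + z - b.

Lemma LagE x z lam :
  L x z lam = \sum_(t < T) f t (x t) + theta / 2 * sqn z + dot lam (residual x z)
              + rho / 2 * sqn (residual x z).
Proof. by []. Qed.

Lemma residual_shift x y z :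
  residual y z = residual x z + \sum_(t < T) A t *m (y t - x t).
Proof.
rewrite /residual; have -> : Aop A y = Aop A x + \sum_(t < T) A t *m (y t - x t).
  by rewrite /Aop -big_split /=; apply: eq_bigr => t _; rewrite mulmxBr subrKC.
by rewrite -!addrA; congr (_ + _); rewrite addrC addrA.
Qed.

Lemma Lag_lam_step x z lam :
  L x z (lam + rho *: residual x z) - L x z lam = rho * sqn (residual x z).
Proof. by rewrite !LagE dotDl dotZl -sqnE; ring. Qed.

Lemma Lag_z_step x z z' lam :
  L x z' lam - L x z lam =
  dot (theta *: z' + lam + rho *: residual x z') (z' - z)
  - (theta + rho) / 2 * sqn (z' - z).
Proof.
have [d ->] : exists d, z' = z + d by exists (z' - z); rewrite subrKC.
rewrite !LagE.
have -> : residual x (z + d) = residual x z + d by rewrite /residual addrA [RHS]addrAC.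
rewrite [z + d - z]addrC addKr sqnD (sqnD (residual x z)) dotDr.
rewrite (dotDl (_ + lam)) (dotDl _ lam) !dotZl (dotDl z) (dotDl (residual x z)) -sqnE.
lra.
Qed.

Variable taux : R.
Local Notation F := (subobj f A b rho taux).

Lemma subobj_residual x z t (y : 'cV[R]_(n t)) :
  A t *m y + \sum_(s < T | s != t) A s *m x s + z - b = residual x z + A t *m (y - x t).
Proof.
rewrite /residual /Aop [in RHS](bigD1 t) //= mulmxBr [RHS]addrC !addrA.
by rewrite subrK.
Qed.

Lemma subobj_sub x z lam t (y : 'cV[R]_(n t)) :
  F x z lam y - F x z lam (x t) =
  f t y - f t (x t) + dot lam (A t *m (y - x t))
  + rho * dot (residual x z) (A t *m (y - x t))
  + (rho + taux) / 2 * sqn (A t *m (y - x t)).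
Proof.
rewrite /subobj !subobj_residual subrr mulmx0 addr0 wsqn0 wsqn_mulTmx.
by rewrite mulmxBr dotBr -mulmxBr sqnD -!/(dot _ _); lra.
Qed.

Lemma Lag_x_step x y z lam :
  L y z lam - L x z lam =
  \sum_(t < T) (F x z lam (y t) - F x z lam (x t))
  + rho / 2 * sqn (\sum_(t < T) A t *m (y t - x t))
  - (rho + taux) / 2 * \sum_(t < T) sqn (A t *m (y t - x t)).
Proof.
under eq_bigr => t _ do rewrite subobj_sub.
rewrite !big_split /= sumrN -!mulr_sumr -!dot_sumr.
by rewrite !LagE (residual_shift x y) sqnD dotDr; lra.
Qed.

Lemma Lag_x_step_le x y z lam :
  0 <= rho -> (forall t, F x z lam (y t) <= F x z lam (x t)) ->
  L y z lam - L x z lam <=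
  ((T%:R - 1) * rho - taux) / 2 * \sum_(t < T) sqn (A t *m (y t - x t)).
Proof.
move=> rho_ge0 descent; rewrite Lag_x_step.
have : \sum_(t < T) (F x z lam (y t) - F x z lam (x t)) <= 0.
  by apply: sumr_le0 => t _; rewrite subr_le0.
have := ler_wpM2l rho_ge0 (sqn_sum_le (fun t => A t *m (y t - x t))).
lra.
Qed.

Section JacobiScheme.
Variables (tauz : R) (x : nat -> forall t, 'cV[R]_(n t)) (z lam : nat -> 'cV[R]_m).
Hypotheses (rho_gt0 : 0 < rho) (theta_gt0 : 0 < theta) (tauz_gt0 : 0 < tauz).
Hypothesis x_descent :
  forall k t, F (x k) (z k) (lam k) (x k.+1 t) <= F (x k) (z k) (lam k) (x k t).
Hypothesis z_update : forall k, z k.+1 = (tauz + rho + theta)^-1 *: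
  (tauz *: z k - rho *: (Aop A (x k.+1) - b) - lam k).
Hypothesis lam_update : forall k, lam k.+1 = lam k + rho *: residual (x k.+1) (z k.+1).

Local Notation Dz := (dz theta tauz z lam).

Lemma z_update_stationary k :
  theta *: z k.+1 + lam k + rho *: residual (x k.+1) (z k.+1)
  = - (tauz *: (z k.+1 - z k)).
Proof.
apply/matrixP => i j; have := congr1 (fun M : 'cV[R]_m => M i j) (z_update k).
rewrite /residual !mxE => ->.
by field; apply: lt0r_neq0; rewrite !addr_gt0.
Qed.

Lemma lamE k : lam k = - (theta *: z k) - tauz *: Dz k.
Proof.
case: k => [|k].
  apply/matrixP => i j; rewrite !mxE.
  by field; apply: lt0r_neq0.
rewrite lam_update; apply: (addrI (theta *: z k.+1)).
by rewrite addrA z_update_stationary addrA subrr add0r.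
Qed.

Lemma lam_step_le k :
  rho * sqn (residual (x k.+1) (z k.+1))
  <= 2 * (theta + tauz) ^+ 2 / rho * (sqn (z k.+1 - z k) + sqn (Dz k)).
Proof.
have dlam : rho *: residual (x k.+1) (z k.+1)
            = - (theta + tauz) *: (z k.+1 - z k) + tauz *: Dz k.
  apply/matrixP => i j; have := congr1 (fun M : 'cV[R]_m => M i j) (lam_update k).
  rewrite (lamE k.+1) (lamE k) /= !mxE; lra.
have := sqnD_le (- (theta + tauz) *: (z k.+1 - z k)) (tauz *: Dz k).
rewrite -dlam !sqnZ sqrrN => sqn_dlam_le.
have tauz_le : tauz ^+ 2 * sqn (Dz k) <= (theta + tauz) ^+ 2 * sqn (Dz k).
  by rewrite ler_wpM2r ?sqn_ge0 // ler_sqr ?nnegrE ?ler_wpDl ?addr_ge0 // ltW.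
by rewrite mulrAC ler_pdivlMr //; lra.
Qed.

Lemma Lag_step_le k :
  L (x k.+1) (z k.+1) (lam k.+1) - L (x k) (z k) (lam k)
  <= ((T%:R - 1) * rho - taux) / 2 * \sum_(t < T) sqn (A t *m (x k.+1 t - x k t))
     - ((theta + rho) / 2 + tauz) * sqn (z k.+1 - z k)
     + 2 * (theta + tauz) ^+ 2 / rho * (sqn (z k.+1 - z k) + sqn (Dz k)).
Proof.
have x_step := Lag_x_step_le (ltW rho_gt0) (x_descent k).
have z_step := Lag_z_step (x k.+1) (z k) (z k.+1) (lam k).
rewrite z_update_stationary -scaleNr dotZl -sqnE in z_step.
have lam_step := Lag_lam_step (x k.+1) (z k.+1) (lam k).
rewrite -lam_update in lam_step.
have := lam_step_le k.
lra.
Qed.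

Lemma PhiE j :
  Phi f A b rho theta taux tauz x z lam j =
  L (x j) (z j) (lam j) + tauz / 4 * sqn (Dz j)
  + \sum_(t < T) taux / 4 * wsqn ((A t)^T *m A t) (dx x j t).
Proof. by case: j => [|j] //=; rewrite big1 ?addr0 // => t _; rewrite wsqn0 mulr0. Qed.

End JacobiScheme.

End AugmentedLagrangian.

Theorem lemma2 (R : realType) (T m : nat) (n : 'I_T -> nat)
  (X : forall t : 'I_T, set 'cV[R]_(n t))
  (f : forall t : 'I_T, 'cV[R]_(n t) -> R)
  (A : forall t : 'I_T, 'M[R]_(m, n t)) (b : 'cV[R]_m)
  (rho theta taux tauz : R)
  (x : nat -> forall t : 'I_T, 'cV[R]_(n t)) (z lam : nat -> 'cV[R]_m) :
  (* (A1) *) (forall t, X t !=set0 /\ compact (X t)) ->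
  (* (A2) *) (forall t, C2 (f t)) ->
  (* (A3) *) row_free (\mxrow_(t < T) A t) ->
  (* (A4) *) (exists xf : forall t : 'I_T, 'cV[R]_(n t),
                (forall t, X t (xf t)) /\ Aop A xf = b) ->
  0 < rho -> 0 < theta -> 0 < taux -> 0 < tauz ->
  0 < taux / 4 - (T%:R - 1) * rho / 2 ->
  0 < tauz / 4 - 2 * (theta + tauz) ^+ 2 / rho ->
  (* initial point *)
  (forall t, X t (x 0%N t)) ->
  (* Jacobi scheme, k >= 1 *)
  (forall (k : nat) (t : 'I_T),
     let F := subobj f A b rho taux (x k) (z k) (lam k) (t:=t) in
     X t (x k.+1 t) /\
     (\forall y \near x k.+1 t, X t y -> F (x k.+1 t) <= F y) /\
     F (x k.+1 t) <= F (x k t)) ->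
  (forall k : nat, z k.+1 = (tauz + rho + theta)^-1 *:
       (tauz *: z k - rho *: (Aop A (x k.+1) - b) - lam k)) ->
  (forall k : nat, lam k.+1 = lam k + rho *: (Aop A (x k.+1) + z k.+1 - b)) ->
  forall k : nat, (1 <= k)%N ->
    Phi f A b rho theta taux tauz x z lam k - Phi f A b rho theta taux tauz x z lam k.-1
    <= - (taux / 4 - (T%:R - 1) * rho / 2) *
           \sum_(t < T) (wsqn ((A t)^T *m A t) (dx x k t)
                         + wsqn ((A t)^T *m A t) (dx x k.-1 t))
       - (tauz / 4 - 2 * (theta + tauz) ^+ 2 / rho) *
           (sqn (dz theta tauz z lam k) + sqn (dz theta tauz z lam k.-1)).
Proof.
move=> _ _ _ _ rho_gt0 theta_gt0 taux_gt0 tauz_gt0 eta_x_gt0 eta_z_gt0 _ scheme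
  z_update lam_update [//|k] _.
have := Lag_step_le rho_gt0 theta_gt0 tauz_gt0 (fun j t => (scheme j t).2.2)
  z_update lam_update k.
rewrite !PhiE /= big_split /= -!mulr_sumr.
have -> : \sum_(t < T) wsqn ((A t)^T *m A t) (x k.+1 t - x k t)
          = \sum_(t < T) sqn (A t *m (x k.+1 t - x k t)).
  by apply: eq_bigr => t _; rewrite wsqn_mulTmx.
have : 0 <= rho * ((T%:R - 1) * \sum_(t < T) wsqn ((A t)^T *m A t) (dx x k t)).
  apply: mulr_ge0; first exact: ltW.
  by apply: natB1_mul_sum_ge0 => t; rewrite wsqn_mulTmx sqn_ge0.
have := mulr_ge0 (addr_ge0 (addr_ge0 (ltW theta_gt0) (ltW rho_gt0)) (ltW tauz_gt0))
  (sqn_ge0 (z k.+1 - z k)).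
lra.
Qed.
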